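(* Let $n=p_1p_2\cdots p_r$, where $r\geq 3$ and $p_1<p_2<\cdots<p_r$ are primes, and let $3\leq s\leq r$. If $\deg(p_{s-1}p_s\cdots p_r)\geq\deg(p_sp_{s+1}\cdots p_r)$ in $\mathcal{P}(C_n)$, then $\deg(p_{s-2}p_{s-1}\cdots p_r)>\deg(p_{s-1}p_s\cdots p_r)$.
   Context: For a finite group $G$, the power graph $\mathcal{P}(G)$ is the simple undirected graph with vertex set $G$ in which two distinct vertices are adjacent if one is an integral power of the other. $C_n$ denotes the cyclic group of order $n$, identified with $\mathbb{Z}_n=\{0,1,\ldots,n-1\}$, so a positive divisor $d$ of $n$ is regarded as the element $d \bmod n\in\mathbb{Z}_n$ (in particular $n$ itself is the element $0$). $\deg(a)$ is the degree of vertex $a$ in $\mathcal{P}(C_n)$. *)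

From mathcomp Require Import all_boot.
Set Implicit Arguments. Unset Strict Implicit. Unset Printing Implicit Defensive.

(* Power graph of C_n = Z_n = {0,...,n-1} (additive): distinct x, y are adjacent
   iff one is an integer multiple of the other mod n.  Since k*x mod n only
   depends on k mod n, multiples k with 0 <= k < n cover all integers k. *)
Definition pg_adj (n x y : nat) : bool :=
  (x != y) &&
  ([exists k : 'I_n, y == (k * x) %% n] || [exists k : 'I_n, x == (k * y) %% n]).

Definition pg_deg (n a : nat) : nat :=
  #|[set y : 'I_n | pg_adj n (a %% n) (val y)]|.

(* Write n = d * e with d, e coprime.  In P(C_n) the multiples of an element x
   are exactly the residues divisible by gcd(x, n); hence a residue y is
   adjacent to d iff d | y or gcd(y, n) | d, i.e. iff d | y or y is coprime
   to e.  Counting these residues below n by inclusion-exclusion gives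
       deg(d) + 1 + phi(e) = e + d * phi(e).
   For n = p_1 ... p_r put B = p_s ... p_r, p = p_(s-2), q = p_(s-1) and
   A = p_1 ... p_(s-3), f = phi(A).  The formula expresses the degrees of
   B, qB and pqB through A, f, p, q, B; the hypothesis deg(B) <= deg(qB)
   becomes A p (q-1) <= f (p-1) (q+B-2), from which the elementary
   inequality A (p-1) < f (qB+p-2), i.e. deg(qB) < deg(pqB), follows. *)

From mathcomp Require Import all_boot zify.

Set Implicit Arguments.
Unset Strict Implicit.
Unset Printing Implicit Defensive.

Lemma dvdn_modn d x n : d %| n -> (d %| x %% n) = (d %| x).
Proof. by move=> dn; rewrite /dvdn (modn_dvdm _ dn). Qed.

(* The residues below n that are multiples of x modulo n are exactly those
   divisible by gcd(x, n) (Bezout). *)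
Lemma multiple_mod_gcd n x y : 0 < n -> y < n ->
  [exists k : 'I_n, y == (k * x) %% n] = (gcdn x n %| y).
Proof.
move=> n0 yn; apply/existsP/idP.
  case=> k /eqP ->; rewrite dvdn_modn ?dvdn_gcdr //.
  exact/dvdn_mull/dvdn_gcdl.
case/dvdnP=> c yc; have [a _ /dvdnP [t ht]] := Bezoutr x n0.
move: (gcdn x n) yc ht => g yc ht.
(* a x = -g modulo n, so the multiplier c (n - 1) a sends x to c g = y *)
exists (Ordinal (ltn_pmod (c * n.-1 * a) n0)); apply/eqP => /=.
rewrite modnMml.
have mult_eq : c * n.-1 * a * x + c * t * n = c * a * x * n + y.
  rewrite yc; case: n n0 yn ht => // m _ _ ht /=.
  have : c * (g + a * x) = c * (t * m.+1) by rewrite ht.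
  nia.
by rewrite -(modnMDl (c * t)) addnC mult_eq modnMDl modn_small.
Qed.

Lemma gcdn_dvd_cofactor y d e : coprime d e -> (gcdn y (d * e) %| d) = coprime y e.
Proof.
move=> cde; apply/idP/idP => h.
  have ge : gcdn y e %| gcdn d e.
    rewrite dvdn_gcd dvdn_gcdr andbT; apply: dvdn_trans h.
    by rewrite dvdn_gcd dvdn_gcdl dvdn_mull ?dvdn_gcdr.
  by rewrite /coprime -dvdn1 -(eqP cde).
have c2 : coprime (gcdn y (d * e)) e by apply: coprime_dvdl h; apply: dvdn_gcdl.
by rewrite -(Gauss_dvdl d c2) dvdn_gcdr.
Qed.

Lemma pg_adj_coprime_factor d e (y : 'I_(d * e)) : 0 < d * e -> coprime d e ->
  pg_adj (d * e) (d %% (d * e)) y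
  = (val y != d %% (d * e)) && ((d %| y) || coprime y e).
Proof.
move=> n0 cde; have xn : d %% (d * e) < d * e by rewrite ltn_mod.
rewrite /pg_adj !multiple_mod_gcd // gcdn_modl gcdnMr eq_sym.
by rewrite dvdn_modn ?dvdn_gcdr // gcdn_dvd_cofactor.
Qed.

Lemma sum_nat_blocks (F : nat -> nat) a b :
  \sum_(0 <= i < a * b) F i = \sum_(0 <= i < a) \sum_(0 <= j < b) F (i * b + j).
Proof.
elim: a => [|a IH]; first by rewrite mul0n !big_geq.
rewrite big_nat_recr //= -IH mulSnr (big_cat_nat _ (leq_addr _ _)) //=.
congr (_ + _); rewrite -{1}(add0n (a * b)) big_addn addnC addnK.
by apply: eq_bigr => j _; rewrite addnC.
Qed.

(* In a block of length d only its first element is a multiple of d. *)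
Lemma sum_block_multiples (B : nat -> bool) i d : 0 < d ->
  \sum_(0 <= j < d) ((d %| i * d + j) && B (i * d + j)) = B (i * d).
Proof.
move=> d0; rewrite big_ltn // addn0 dvdn_mull //=.
rewrite big_nat_cond big1 ?addn0 // => j /andP [/andP [j1 jd] _].
by rewrite dvdn_addr ?dvdn_mull // gtnNdvd.
Qed.

Lemma count_multiples d e : 0 < d -> \sum_(0 <= i < d * e) (d %| i) = e.
Proof.
move=> d0; rewrite mulnC sum_nat_blocks.
rewrite (eq_bigr (fun _ => 1)) ?sum_nat_const_nat ?subn0 ?muln1 // => i _.
rewrite -[RHS]/(nat_of_bool (xpredT (i * d))) -(sum_block_multiples xpredT i d0).
by apply: eq_bigr => j _; rewrite andbT.
Qed.

Lemma count_coprime d e : \sum_(0 <= i < d * e) coprime i e = d * totient e.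
Proof.
rewrite sum_nat_blocks (eq_bigr (fun _ => totient e)) ?sum_nat_const_nat ?subn0 //.
move=> i _; rewrite totient_count_coprime; apply: eq_bigr => j _.
by rewrite -coprime_modl modnMDl coprime_modl coprime_sym.
Qed.

Lemma count_multiples_coprime d e : 0 < d -> coprime d e ->
  \sum_(0 <= i < d * e) ((d %| i) && coprime i e) = totient e.
Proof.
move=> d0 cde; rewrite mulnC sum_nat_blocks totient_count_coprime.
apply: eq_bigr => i _; rewrite (sum_block_multiples (coprime^~ e) i d0).
by rewrite coprimeMl cde andbT coprime_sym.
Qed.

Lemma pg_deg_coprime_factor n d e : 0 < d -> 0 < e -> n = d * e -> coprime d e ->
  pg_deg n d + 1 + totient e = e + d * totient e.
Proof.
move=> d0 e0 -> cde; have n0 : 0 < d * e by rewrite muln_gt0 d0.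
pose P i := (d %| i) || coprime i e.
have Pd : P (d %% (d * e)) by rewrite /P dvdn_modn ?dvdnn ?dvdn_mulr.
have deg_sum : pg_deg (d * e) d + 1 = \sum_(0 <= i < d * e) P i.
  pose x : 'I_(d * e) := Ordinal (ltn_pmod d n0).
  rewrite big_mkord /pg_deg -sum1dep_card big_mkcond /= (bigD1 x) //.
  rewrite [RHS](bigD1 x) //= {1}/pg_adj eqxx Pd add0n addnC; congr (_ + _).
  apply: eq_bigr => y ney; rewrite pg_adj_coprime_factor //.
  by rewrite -val_eqE /= in ney; rewrite ney.
have incl_excl : \sum_(0 <= i < d * e) P i
    + \sum_(0 <= i < d * e) ((d %| i) && coprime i e)
  = \sum_(0 <= i < d * e) (d %| i) + \sum_(0 <= i < d * e) coprime i e.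
  rewrite -!big_split; apply: eq_bigr => i _ /=.
  by rewrite /P; case: (d %| i); case: (coprime i e).
by move: incl_excl; rewrite -deg_sum count_multiples_coprime // count_multiples
  // count_coprime.
Qed.

Lemma key_inequality A f u v b : 0 < u <= v -> 0 < f ->
  A * u.+1 * v <= f * u * (v + b) -> A * u < f * (v.+1 * b + v + u).
Proof.
move=> /andP [u0 uv] f0 hyp.
(* multiplying hyp by u bounds A u (u+1) v by f u^2 (v+b) *)
have small : u * u * (v + b) < u.+1 * v * (v.+1 * b + v + u) by nia.
have : A * u * (u.+1 * v) < f * (v.+1 * b + v + u) * (u.+1 * v) by nia.
by rewrite ltn_pmul2r // muln_gt0; lia.
Qed.

Lemma degree_comparison A f p q B d1 d2 d3 :
  1 < p <= q -> 0 < f -> 0 < B ->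
  d3 + 1 + f * p.-1 * q.-1 = A * p * q + B * (f * p.-1 * q.-1) ->
  d2 + 1 + f * p.-1 = A * p + q * B * (f * p.-1) ->
  d1 + 1 + f = A + p * (q * B) * f ->
  d3 <= d2 -> d2 < d1.
Proof.
move=> pq f0 B0 E3 E2 E1 d32.
have [u ep] : exists u, p = u.+1 by exists p.-1; lia.
have [v eq] : exists v, q = v.+1 by exists q.-1; lia.
have [b eB] : exists b, B = b.+1 by exists B.-1; lia.
subst p q B; rewrite /= in E3 E2; have uv : 0 < u <= v by lia.
have hyp : A * u.+1 * v <= f * u * (v + b) by nia.
(* d1 - d2 = f ((v+1) b + v + u) - A u *)
have := key_inequality uv f0 hyp; lia.
Qed.

Definition prefix_prod (p : nat -> nat) (b : nat) : nat := \prod_(1 <= i < b) p i.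
Definition suffix_prod (p : nat -> nat) (r b : nat) : nat := \prod_(b <= i < r.+1) p i.

Lemma suffix_prod_cons (p : nat -> nat) r b :
  b <= r -> suffix_prod p r b = p b * suffix_prod p r b.+1.
Proof. by move=> br; rewrite /suffix_prod big_ltn. Qed.

Lemma prefix_prod_snoc (p : nat -> nat) b :
  0 < b -> prefix_prod p b.+1 = prefix_prod p b * p b.
Proof. by move=> b0; rewrite /prefix_prod big_nat_recr. Qed.

Section IncreasingPrimes.

Variables (p : nat -> nat) (r : nat).
Hypothesis p_prime : forall i, 1 <= i <= r -> prime (p i).
Hypothesis p_increasing : forall i j, 1 <= i -> i < j -> j <= r -> p i < p j.

Lemma prod_primes_gt0 a b : 0 < a -> b <= r.+1 -> 0 < \prod_(a <= i < b) p i.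
Proof.
move=> a0 br; rewrite big_nat_cond; apply: prodn_cond_gt0 => i /andP [/andP [ai ib] _].
by apply/prime_gt0/p_prime; lia.
Qed.

Lemma prod_primes_coprime a b c : 0 < a -> c <= r.+1 ->
  coprime (\prod_(b <= j < c) p j) (\prod_(a <= i < b) p i).
Proof.
move=> a0 cr; rewrite big_nat_cond; apply: (big_ind (coprime^~ _)) => [||j].
- exact: coprime1n.
- by move=> x y cx cy; rewrite coprimeMl cx cy.
move=> /andP [/andP [bj jc] _]; rewrite big_nat_cond.
apply: (big_ind (coprime _)) => [||i].
- exact: coprimen1.
- by move=> x y cx cy; rewrite coprimeMr cx cy.
move=> /andP [/andP [ai ib] _].
have lt_ij : p i < p j by apply: p_increasing; lia.
rewrite prime_coprime ?dvdn_prime2 ?p_prime //; lia.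
Qed.

Lemma prefix_prod_gt0 b : b <= r.+1 -> 0 < prefix_prod p b.
Proof. exact: prod_primes_gt0. Qed.

Lemma suffix_prod_gt0 b : 0 < b -> 0 < suffix_prod p r b.
Proof. by move=> b0; apply: prod_primes_gt0. Qed.

Lemma totient_prefix_snoc b : 0 < b <= r ->
  totient (prefix_prod p b.+1) = totient (prefix_prod p b) * (p b).-1.
Proof.
move=> /andP [b0 br]; have pb : prime (p b) by apply: p_prime; lia.
rewrite prefix_prod_snoc // totient_coprime ?(totient_prime pb) //.
by rewrite coprime_sym -(big_nat1 muln b p) prod_primes_coprime.
Qed.

Lemma pg_deg_suffix_prod b : 0 < b <= r.+1 ->
  pg_deg (\prod_(1 <= i < r.+1) p i) (suffix_prod p r b) + 1
    + totient (prefix_prod p b)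
  = prefix_prod p b + suffix_prod p r b * totient (prefix_prod p b).
Proof.
move=> /andP [b0 br]; apply: pg_deg_coprime_factor.
- exact: suffix_prod_gt0.
- exact: prefix_prod_gt0.
- by rewrite mulnC /prefix_prod /suffix_prod -big_cat_nat.
- exact: prod_primes_coprime.
Qed.

End IncreasingPrimes.

Theorem lemma3p3 (r s n : nat) (p : nat -> nat) :
  3 <= r ->
  (forall i, 1 <= i <= r -> prime (p i)) ->
  (forall i j, 1 <= i -> i < j -> j <= r -> p i < p j) ->
  n = \prod_(1 <= i < r.+1) p i ->
  3 <= s <= r ->
  pg_deg n (\prod_(s <= i < r.+1) p i) <= pg_deg n (\prod_(s.-1 <= i < r.+1) p i) ->
  pg_deg n (\prod_(s.-1 <= i < r.+1) p i) < pg_deg n (\prod_(s.-2 <= i < r.+1) p i).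
Proof.
move=> _ p_prime p_increasing -> /andP [s3 sr].
have [a sa] : exists a, s = a.+2 by exists s.-2; lia.
subst s.
rewrite /= -/(suffix_prod p r a.+2) -/(suffix_prod p r a.+1) -/(suffix_prod p r a).
have a0 : 0 < a by lia.
have D3 := pg_deg_suffix_prod p_prime p_increasing (b := a.+2) ltac:(lia).
have D2 := pg_deg_suffix_prod p_prime p_increasing (b := a.+1) ltac:(lia).
have D1 := pg_deg_suffix_prod p_prime p_increasing (b := a) ltac:(lia).
have T2 := totient_prefix_snoc p_prime p_increasing (b := a) ltac:(lia).
have T3 := totient_prefix_snoc p_prime p_increasing (b := a.+1) ltac:(lia).
have P1 := prefix_prod_snoc p a0; have P2 := prefix_prod_snoc p (ltn0Sn a).
have S1 := suffix_prod_cons p (r := r) (b := a.+1) ltac:(lia).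
have S0 := suffix_prod_cons p (r := r) (b := a) ltac:(lia).
rewrite T3 T2 P2 P1 in D3; rewrite T2 P1 in D2; rewrite S0 S1 in D1 D2 *.
apply: degree_comparison D3 D2 D1.
- apply/andP; split; first by apply/prime_gt1/p_prime; lia.
  by apply/ltnW/p_increasing; lia.
- by rewrite totient_gt0; apply: (prefix_prod_gt0 p_prime); lia.
- exact: (suffix_prod_gt0 p_prime).
Qed.
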